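(* Let $\Bbbk$ be an algebraically closed field of characteristic $2$ and let $\mathfrak{u}(\mathfrak{m})$ be the algebra generated by $a,b,c$ with relations $ab+ba=c$, $ac+ca=a$, $bc+cb=b$, $a^4=b^4=0$, $c^2+c=0$. The elements $e_0=(1+ab+a^2b^2)(1+c)$ and $e_1=(1+a^2b^2)c$ are idempotents of $\mathfrak{u}(\mathfrak{m})$, and $P(V_0)\simeq\mathfrak{u}(\mathfrak{m})e_0$, $P(V_1)\simeq\mathfrak{u}(\mathfrak{m})e_1$ as left $\mathfrak{u}(\mathfrak{m})$-modules.
   Context: $P(V)$ denotes the projective cover of $V$. $V_0$ is the one-dimensional module with $a,b,c$ acting by $0$; $V_1$ is the three-dimensional module with basis $v_1,v_2,v_3$, $av_1=v_2$, $av_2=v_3$, $av_3=0$, $bv_1=0$, $bv_2=v_1$, $bv_3=v_2$, $cv_1=v_1$, $cv_2=0$, $cv_3=v_3$. *)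

From HB Require Import structures.
From mathcomp Require Import all_boot all_order all_algebra.
Set Implicit Arguments. Unset Strict Implicit. Unset Printing Implicit Defensive.
Import GRing.Theory.
Local Open Scope ring_scope.

Definition um_rels (R : pzRingType) (a b c : R) : Prop :=
  [/\ a * b + b * a = c, a * c + c * a = a, b * c + c * b = b,
      a ^+ 4 = 0 & b ^+ 4 = 0] /\ c ^+ 2 + c = 0.

Definition um_presented (k : fieldType) (A : algType k) (a b c : A) : Prop :=
  um_rels a b c /\
  forall (B : algType k) (a' b' c' : B), um_rels a' b' c' ->
    (exists f : {lrmorphism A -> B}, [/\ f a = a', f b = b' & f c = c']) /\
    (forall f g : {lrmorphism A -> B},
        f a = g a -> f b = g b -> f c = g c -> f =1 g).

Definition projective_mod (A : pzRingType) (P : lmodType A) : Prop :=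
  forall (M N : lmodType A) (f : {linear M -> N}) (g : {linear P -> N}),
    (forall y, exists x, f x = y) ->
    exists h : {linear P -> M}, forall p, f (h p) = g p.

Definition essential_epi (A : pzRingType) (P V : lmodType A)
    (pi : {linear P -> V}) : Prop :=
  (forall v, exists p, pi p = v) /\
  forall (M : lmodType A) (g : {linear M -> P}),
    (forall v, exists m, pi (g m) = v) -> forall p, exists m, g m = p.

Definition projective_cover (A : pzRingType) (P V : lmodType A) : Prop :=
  projective_mod P /\ exists pi : {linear P -> V}, essential_epi pi.

Definition iso_left_ideal (A : nzRingType) (P : lmodType A) (e : A) : Prop :=
  exists f : {linear P -> A^o}, injective f /\
    forall x : A, (exists p, f p = x) <-> (exists y : A, x = y * e).

(* V is the one-dimensional module V_0 (a, b, c act by 0);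
   the k-structure on an A-module is s *: v := s%:A *: v *)
Definition is_V0 (k : fieldType) (A : algType k) (a b c : A) (V : lmodType A)
  : Prop :=
  (exists v0 : V, v0 <> 0 /\ forall v : V, exists s : k, v = s%:A *: v0) /\
  (forall v : V, [/\ a *: v = 0, b *: v = 0 & c *: v = 0]).

Definition is_V1 (k : fieldType) (A : algType k) (a b c : A) (V : lmodType A)
  : Prop :=
  exists v1 v2 v3 : V,
    [/\ forall v : V, exists x y z : k,
          v = x%:A *: v1 + y%:A *: v2 + z%:A *: v3,
        forall x y z : k, x%:A *: v1 + y%:A *: v2 + z%:A *: v3 = 0 ->
          [/\ x = 0, y = 0 & z = 0],
        [/\ a *: v1 = v2, a *: v2 = v3 & a *: v3 = 0],
        [/\ b *: v1 = 0, b *: v2 = v1 & b *: v3 = v2] &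
        [/\ c *: v1 = v1, c *: v2 = 0 & c *: v3 = v3]].

(* In characteristic 2, every identity needed between elements of u(m) is an
   identity of noncommutative polynomials over F_2 modulo the rewriting rules
   ba -> ab + c, ca -> ac + a, cb -> bc + b, cc -> c, aaaa -> 0, bbbb -> 0, whose
   irreducible words are the 32 monomials a^i b^j c^l (i, j < 4, l < 2). Such identities
   are checked by normalising words.
   For e = e_0 or e_1 and n = e ab e one checks e^2 = e, n^2 = 0 and that e m e lies in
   F_2 e + F_2 n for every monomial m. Since u(m) is generated by a, b, c, the monomials
   span it, so eAe = k e + k n is a local ring with radical k n. Take v = v_0, resp.
   v = v_1: it generates V, e v = v and b v = 0, hence n v = 0. Then p |-> p v maps the
   projective module Ae onto V, and essentially so: if x in Ae fixes v then
   e x = e + s n, a unit of eAe, so x generates Ae. *)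

From HB Require Import structures.
From mathcomp Require Import all_boot all_order all_algebra.
From Stdlib Require Import ClassicalEpsilon.
Set Implicit Arguments. Unset Strict Implicit. Unset Printing Implicit Defensive.
Import GRing.Theory.
Local Open Scope ring_scope.

Section Span.
Variables (R : pzRingType) (V : lmodType R).

Inductive in_span (S : seq V) : V -> Prop :=
  | span0 : in_span S 0
  | spanD (x : R) (s v : V) : s \in S -> in_span S v -> in_span S (x *: s + v).

Lemma span_mem (S : seq V) (s : V) : s \in S -> in_span S s.
Proof. by move=> Ss; rewrite -[s]addr0 -[s]scale1r; apply: spanD => //; apply: span0. Qed.

Lemma span_add (S : seq V) (u v : V) : in_span S u -> in_span S v -> in_span S (u + v).
Proof.
elim=> [|x s w Ss _ IHw] Sv; first by rewrite add0r.
by rewrite -addrA; apply: spanD => //; apply: IHw.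
Qed.

Lemma span_scale (S : seq V) (x : R) (u : V) : in_span S u -> in_span S (x *: u).
Proof.
elim=> [|y s w Ss _ IHw]; first by rewrite scaler0; apply: span0.
by rewrite scalerDr scalerA; apply: spanD.
Qed.

Lemma span_seq2 (u v w : V) : in_span [:: u; v] w -> exists x y : R, w = x *: u + y *: v.
Proof.
elim=> [|x s w' + _ [y [z ->]]]; first by exists 0, 0; rewrite !scale0r addr0.
rewrite !inE => /orP [] /eqP ->.
  by exists (x + y), z; rewrite scalerDl addrA.
by exists y, (x + z); rewrite scalerDl addrCA addrA.
Qed.

End Span.

Lemma span_linear (R : pzRingType) (V W : lmodType R) (f : V -> W)
    (S : seq V) (T : seq W) :
  linear f -> {in S, forall s, in_span T (f s)} ->
  forall v, in_span S v -> in_span T (f v).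
Proof.
move=> f_lin fS v; have f0 : f 0 = 0.
  by have := f_lin (-1) 0 0; rewrite scaler0 addr0 scaleN1r addNr.
elim=> [|x s w Ss _ IHw]; first by rewrite f0; apply: span0.
by rewrite f_lin; apply: span_add => //; apply: span_scale; apply: fS.
Qed.

Section PresentedInduction.
Variables (k : fieldType) (A : algType k) (Q : A -> Prop).
Hypotheses (Q1 : Q 1) (QD : forall x y, Q x -> Q y -> Q (x + y)).
Hypotheses (QZ : forall (r : k) x, Q x -> Q (r *: x)) (QM : forall x y, Q x -> Q y -> Q (x * y)).

Definition Qpred : {pred A} :=
  fun x => if excluded_middle_informative (Q x) then true else false.

Lemma QpredP (x : A) : reflect (Q x) (x \in Qpred).
Proof. by rewrite unfold_in /Qpred; case: excluded_middle_informative => Qx; constructor. Qed.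

Lemma Qpred_subalg_closed : GRing.subsemialg_closed Qpred.
Proof.
have Q0 : Q 0 by rewrite -(scale0r 1); apply: QZ.
split; first exact/QpredP.
- by split=> [|x y /QpredP Qx /QpredP Qy]; apply/QpredP; [exact: Q0 | exact: QD].
- by move=> r x /QpredP Qx; apply/QpredP; apply: QZ.
- by move=> x y /QpredP Qx /QpredP Qy; apply/QpredP; apply: QM.
Qed.

HB.instance Definition _ := GRing.isSubalgClosed.Build k A Qpred Qpred_subalg_closed.
Record subalg_Q := SubalgQ { subalg_val :> A; _ : subalg_val \in Qpred }.
HB.instance Definition _ := [isSub for subalg_val].
HB.instance Definition _ := [Choice of subalg_Q by <:].
HB.instance Definition _ := [SubChoice_isSubAlgebra of subalg_Q by <:].

Definition subalg_incl (x : subalg_Q) : A := subalg_val x.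
HB.instance Definition _ :=
  GRing.isLinear.Build k subalg_Q A _ subalg_incl (fun _ _ _ => erefl).
HB.instance Definition _ :=
  GRing.isMonoidMorphism.Build subalg_Q A subalg_incl (erefl, fun _ _ => erefl).

Lemma um_presented_ind (a b c : A) : um_presented a b c -> Q a -> Q b -> Q c -> forall z, Q z.
Proof.
move=> [rels univ] /QpredP Qa /QpredP Qb /QpredP Qc z.
pose a' := SubalgQ Qa; pose b' := SubalgQ Qb; pose c' := SubalgQ Qc.
have rels' : um_rels a' b' c'.
  by case: rels => [[? ? ? ? ?] ?]; do ![split | apply: val_inj].
have [[f [fa fb fc]] _] := univ _ a' b' c' rels'.
pose g : {lrmorphism A -> A} := subalg_incl \o f.
have gK : idfun =1 g by apply: (univ _ a b c rels).2; rewrite /= ?fa ?fb ?fc.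
by rewrite [z]gK /=; case: (f z) => x /= Qx; apply/QpredP.
Qed.

End PresentedInduction.

Section IdempotentCover.
Variables (A : nzRingType) (e : A).

Definition left_ideal_pred : {pred A^o} := fun x : A^o => x * e == x.

Lemma left_ideal_submod_closed : submod_closed left_ideal_pred.
Proof.
split=> [|r x y /eqP xe /eqP ye]; rewrite unfold_in /= ?mul0r //.
by rewrite mulrDl -mulrA xe ye.
Qed.

HB.instance Definition _ :=
  GRing.isSubmodClosed.Build A A^o left_ideal_pred left_ideal_submod_closed.
Record left_ideal := LeftIdeal { left_ideal_val :> A^o; _ : left_ideal_val \in left_ideal_pred }.
HB.instance Definition _ := [isSub for left_ideal_val].
HB.instance Definition _ := [Choice of left_ideal by <:].
HB.instance Definition _ := [SubChoice_isSubLmodule of left_ideal by <:].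
HB.instance Definition _ :=
  GRing.isLinear.Build A left_ideal A^o _ left_ideal_val (fun _ _ _ => erefl).

Lemma left_ideal_valK (p : left_ideal) : left_ideal_val p * e = left_ideal_val p.
Proof. by case: p => x /= xe; apply/eqP. Qed.

Definition act_on (M : lmodType A) (m : M) (p : left_ideal) : M := left_ideal_val p *: m.
Lemma act_on_linear (M : lmodType A) (m : M) : linear (act_on m).
Proof. by move=> r p q; rewrite /act_on /= scalerDl scalerA. Qed.
HB.instance Definition _ (M : lmodType A) (m : M) :=
  GRing.isLinear.Build A left_ideal M _ (act_on m) (act_on_linear m).

Hypothesis ee : e * e = e.

Lemma mulr_idem_in_left_ideal (z : A) : (z * e : A^o) \in left_ideal_pred.
Proof. by rewrite unfold_in /= -mulrA ee. Qed.

Definition left_ideal_gen : left_ideal := LeftIdeal (mulr_idem_in_left_ideal 1).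

Lemma left_ideal_genE (p : left_ideal) : left_ideal_val p *: left_ideal_gen = p.
Proof. by apply: val_inj; rewrite /= mul1r; apply: left_ideal_valK. Qed.

Lemma left_ideal_iso : iso_left_ideal left_ideal e.
Proof.
exists left_ideal_val; split; first exact: val_inj.
move=> x; split=> [[p <-]|[y ->]]; first by exists (left_ideal_val p); rewrite left_ideal_valK.
by exists (LeftIdeal (mulr_idem_in_left_ideal y)).
Qed.

Lemma left_ideal_projective : projective_mod left_ideal.
Proof.
move=> M N f g f_onto; have [m fm] := f_onto (g left_ideal_gen).
by exists (act_on m) => p; rewrite /act_on linearZ fm -linearZ left_ideal_genE.
Qed.

Lemma left_ideal_cover (V : lmodType A) (v : V) :
  e *: v = v -> (forall u : V, exists z : A, z *: v = u) ->
  (forall x : A, x * e = x -> x *: v = v -> exists y, y * x = e) ->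
  projective_cover left_ideal V.
Proof.
move=> ev v_gen fix_gen; split; first exact: left_ideal_projective.
exists (act_on v); split=> [u|M g g_onto p].
  have [z <-] := v_gen u; exists (LeftIdeal (mulr_idem_in_left_ideal z)).
  by rewrite /act_on /= -{2}ev scalerA.
have [m gm] := g_onto v; have [y yx] := fix_gen _ (left_ideal_valK _) gm.
exists ((left_ideal_val p * y) *: m); apply: val_inj.
by rewrite linearZ /= -[RHS]left_ideal_valK -yx mulrA.
Qed.

End IdempotentCover.

Section LocalCorner.
Variables (k : fieldType) (A : algType k) (e n : A).
Hypotheses (ee : e * e = e) (en : e * n = n) (ne : n * e = n) (nn : n * n = 0).
Hypothesis corner : forall z : A, exists x y : k, e * z * e = x *: e + y *: n.

Lemma scale_actE (V : lmodType A) (r : k) (x : A) (v : V) : (r *: x) *: v = r%:A *: (x *: v).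
Proof. by rewrite scalerA mulr_algl. Qed.

Lemma scalar_fixed_eq1 (V : lmodType A) (v : V) (r : k) : v != 0 -> r%:A *: v = v -> r = 1.
Proof.
move=> nz_v rv; apply/eqP; apply: contraNT nz_v; rewrite -subr_eq0 => r1_neq0.
have r1v : (r - 1)%:A *: v = 0 by rewrite !scalerBl !scale1r rv subrr.
have -> : v = ((r - 1)^-1)%:A *: ((r - 1)%:A *: v).
  by rewrite scalerA mulr_algl scalerA mulVf // !scale1r.
by rewrite r1v scaler0.
Qed.

(* [(e - s n) (e + s n) = e] in the local ring [e A e]. *)
Lemma corner_fixed_generates (V : lmodType A) (v : V) :
  e *: v = v -> n *: v = 0 -> v != 0 ->
  forall x : A, x * e = x -> x *: v = v -> exists y, y * x = e.
Proof.
move=> ev nv nz_v x xe xv; have [r [s exE]] := corner x.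
rewrite -mulrA xe in exE.
have r1 : r = 1.
  apply: scalar_fixed_eq1 nz_v _.
  have exv : (e * x) *: v = v by rewrite -scalerA xv ev.
  by rewrite -[RHS]exv exE scalerDl (scale_actE r e) (scale_actE s n) ev nv scaler0 addr0.
exists (e - s *: n).
have ye : (e - s *: n) * e = e - s *: n by rewrite mulrBl -scalerAl ee ne.
rewrite -ye -mulrA exE r1 scale1r mulrBl !mulrDr -!scalerAl -!scalerAr ee en ne nn.
by rewrite !scaler0 addr0 addrK.
Qed.

End LocalCorner.

Inductive term :=
  | Tgen of nat | Tzero | Tone
  | Tadd of term & term | Tmul of term & term | Texp of term & nat.

(* Letters 0, 1, 2 stand for a, b, c; a polynomial over F_2 is a list of words, a
   repeated word cancelling in pairs. *)
Definition word := seq nat.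
Definition ncpoly := seq word.

Definition head_rule (w : word) : option ncpoly :=
  match w with
  | [:: 1, 0 & t] => Some [:: [:: 0, 1 & t]; 2 :: t]
  | [:: 2, 0 & t] => Some [:: [:: 0, 2 & t]; 0 :: t]
  | [:: 2, 1 & t] => Some [:: [:: 1, 2 & t]; 1 :: t]
  | [:: 2, 2 & t] => Some [:: 2 :: t]
  | [:: 0, 0, 0, 0 & _] | [:: 1, 1, 1, 1 & _] => Some [::]
  | _ => None
  end.

Arguments head_rule : simpl never.

Fixpoint rewrite_word (w : word) : option ncpoly :=
  if head_rule w is Some p then Some p
  else if w is x :: w' then omap (map (cons x)) (rewrite_word w') else None.

Definition toggle (w : word) (p : ncpoly) := if w \in p then rem w p else w :: p.
Definition cancel_pairs (p : ncpoly) : ncpoly := foldr toggle [::] p.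

Definition rewrite_step (p : ncpoly) : ncpoly :=
  cancel_pairs (flatten [seq odflt [:: w] (rewrite_word w) | w <- p]).

Definition normalize_step (p : ncpoly) : ncpoly :=
  if has (isSome \o rewrite_word) p then rewrite_step p else p.

(* 64 is fuel: an unfinished normalisation can only make a check fail. *)
Definition lmul_word (w : word) (q : ncpoly) : ncpoly :=
  foldr (fun x r => iter 64 normalize_step (cancel_pairs [seq x :: u | u <- r])) q w.
Definition ncmul (p q : ncpoly) : ncpoly :=
  cancel_pairs (flatten [seq lmul_word w q | w <- p]).

Fixpoint nf (t : term) : ncpoly :=
  match t with
  | Tgen n => [:: [:: n]] | Tzero => [::] | Tone => [:: [::]]
  | Tadd x y => cancel_pairs (nf x ++ nf y)
  | Tmul x y => ncmul (nf x) (nf y)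
  | Texp x n => iter n (ncmul (nf x)) [:: [::]]
  end.

Definition nf_eq (t1 t2 : term) : bool := perm_eq (nf t1) (nf t2).

Section NormalFormSound.
Variables (A : pzRingType) (a b c : A).

Definition gen (x : nat) : A := match x with 0 => a | 1 => b | _ => c end.

Fixpoint eval_term (t : term) : A :=
  match t with
  | Tgen x => gen x | Tzero => 0 | Tone => 1
  | Tadd t1 t2 => eval_term t1 + eval_term t2
  | Tmul t1 t2 => eval_term t1 * eval_term t2
  | Texp t1 n => eval_term t1 ^+ n
  end.

Definition eval_word (w : word) : A := foldr (fun x r => gen x * r) 1 w.
Definition eval_poly (p : ncpoly) : A := \sum_(w <- p) eval_word w.

Lemma eval_poly_cat (p q : ncpoly) : eval_poly (p ++ q) = eval_poly p + eval_poly q.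
Proof. exact: big_cat. Qed.

Lemma eval_poly_cons (w : word) (p : ncpoly) :
  eval_poly (w :: p) = eval_word w + eval_poly p.
Proof. exact: big_cons. Qed.

Lemma eval_poly_map_cons (x : nat) (p : ncpoly) :
  eval_poly (map (cons x) p) = gen x * eval_poly p.
Proof. by rewrite /eval_poly big_map mulr_sumr. Qed.

Hypothesis rels : um_rels a b c.
Hypothesis char2 : 2%:R = 0 :> A.

Lemma addxx (x : A) : x + x = 0.
Proof. by rewrite -mulr2n -mulr_natr char2 mulr0. Qed.

Lemma head_rule_sound (w : word) (p : ncpoly) :
  head_rule w = Some p -> eval_word w = eval_poly p.
Proof.
have [[ab ac bc a4 b4] c2] := rels.
have swap (x y z : A) : x + y = z -> y = x + z.
  by move=> <-; rewrite addrA addxx add0r.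
have nil4 (x t : A) : x ^+ 4 = 0 -> x * (x * (x * (x * t))) = 0.
  by move=> x4; rewrite !mulrA -expr2 -!exprSr x4 mul0r.
rewrite /eval_poly /head_rule; case: w => [|[|[|[|x]]] [|[|[|[|y]]] t]] //=.
- by case: t => [|[|?] [|[|?] ?]] //= [<-]; rewrite big_nil nil4.
- by move=> [<-]; rewrite !big_cons big_nil addr0 /= mulrA (swap _ _ _ ab) mulrDl -mulrA.
- by case: t => [|[|[|?]] [|[|[|?]] ?]] //= [<-]; rewrite big_nil nil4.
- by move=> [<-]; rewrite !big_cons big_nil addr0 /= mulrA (swap _ _ _ ac) mulrDl -mulrA.
- by move=> [<-]; rewrite !big_cons big_nil addr0 /= mulrA (swap _ _ _ bc) mulrDl -mulrA.
- by move=> [<-]; rewrite big_seq1 /= mulrA -expr2 (swap c (c ^+ 2) 0) ?addr0 // addrC.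
Qed.

Lemma rewrite_word_sound (w : word) (p : ncpoly) :
  rewrite_word w = Some p -> eval_word w = eval_poly p.
Proof.
elim: w p => [|x w IHw] p //=.
case Hw: (head_rule _) => [q|]; first by move=> [<-]; exact: head_rule_sound Hw.
case Hr: (rewrite_word w) => [q|] //= [<-].
by rewrite eval_poly_map_cons -(IHw _ Hr).
Qed.

Lemma eval_cancel_pairs (p : ncpoly) : eval_poly (cancel_pairs p) = eval_poly p.
Proof.
elim: p => [|w p IHp] //=; rewrite eval_poly_cons -IHp /toggle.
case: ifP => [wp|_]; last exact: eval_poly_cons.
by rewrite /eval_poly (perm_big _ (perm_to_rem wp)) big_cons addrA addxx add0r.
Qed.

Lemma eval_rewrite_step (p : ncpoly) : eval_poly (rewrite_step p) = eval_poly p.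
Proof.
rewrite eval_cancel_pairs; elim: p => [|w p IHp] //=.
rewrite eval_poly_cat eval_poly_cons IHp; congr (_ + _).
case Hw: (rewrite_word w) => [q|] /=; first by rewrite -(rewrite_word_sound Hw).
by rewrite /eval_poly big_seq1.
Qed.

Lemma eval_normalize (n : nat) (p : ncpoly) : eval_poly (iter n normalize_step p) = eval_poly p.
Proof.
elim: n => [|n IHn] //=; rewrite -IHn /normalize_step.
by case: ifP => // _; rewrite eval_rewrite_step.
Qed.

Lemma eval_lmul_word (w : word) (q : ncpoly) :
  eval_poly (lmul_word w q) = eval_word w * eval_poly q.
Proof.
elim: w => [|x w IHw]; first by rewrite mul1r.
by rewrite eval_normalize eval_cancel_pairs eval_poly_map_cons IHw mulrA.
Qed.

Lemma eval_ncmul (p q : ncpoly) : eval_poly (ncmul p q) = eval_poly p * eval_poly q.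
Proof.
rewrite eval_cancel_pairs; elim: p => [|w p IHp] /=.
  by rewrite /eval_poly !big_nil mul0r.
by rewrite eval_poly_cat IHp eval_lmul_word eval_poly_cons mulrDl.
Qed.

Lemma eval_nf (t : term) : eval_poly (nf t) = eval_term t.
Proof.
elim: t => [x||| t1 IH1 t2 IH2 | t1 IH1 t2 IH2 | t1 IH1 n] /=.
- by rewrite /eval_poly big_seq1 /= mulr1.
- by rewrite /eval_poly big_nil.
- by rewrite /eval_poly big_seq1.
- by rewrite eval_cancel_pairs eval_poly_cat IH1 IH2.
- by rewrite eval_ncmul IH1 IH2.
- elim: n => [|n IHn]; first by rewrite /eval_poly big_seq1.
  by rewrite iterS eval_ncmul IHn IH1 exprS.
Qed.

Lemma nf_eq_sound (t1 t2 : term) : nf_eq t1 t2 -> eval_term t1 = eval_term t2.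
Proof. by move=> eq12; rewrite -!eval_nf; apply: perm_big. Qed.

End NormalFormSound.

Definition normal_words : ncpoly :=
  [seq u ++ nseq l 2 | u <- [seq nseq i 0 ++ nseq j 1 | i <- iota 0 4, j <- iota 0 4],
                        l <- iota 0 2].

Lemma normal_words_mul_closed :
  all (fun w => all (fun x => all (mem normal_words) (ncmul [:: [:: x]] [:: w]))
                    [:: 0; 1; 2]) normal_words.
Proof. by vm_compute. Qed.

Definition sandwich_term (e : term) : term := Tmul (Tmul e (Tmul (Tgen 0) (Tgen 1))) e.

Definition corner_check (e n : term) : bool :=
  all (fun w => has (perm_eq (ncmul (nf e) (ncmul [:: w] (nf e))))
                    [:: nf Tzero; nf e; nf n; nf (Tadd e n)]) normal_words.

Definition local_idempotent_check (e : term) : bool :=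
  let n := sandwich_term e in
  [&& nf_eq (Tmul e e) e, nf_eq (Tmul n n) Tzero & corner_check e n].

Definition e0_term : term :=
  Tmul (Tadd (Tadd Tone (Tmul (Tgen 0) (Tgen 1))) (Tmul (Texp (Tgen 0) 2) (Texp (Tgen 1) 2)))
       (Tadd Tone (Tgen 2)).
Definition e1_term : term :=
  Tmul (Tadd Tone (Tmul (Texp (Tgen 0) 2) (Texp (Tgen 1) 2))) (Tgen 2).

Lemma e0_check : local_idempotent_check e0_term. Proof. by vm_compute. Qed.
Lemma e1_check : local_idempotent_check e1_term. Proof. by vm_compute. Qed.

Section UmAlgebra.
Variables (k : fieldType) (A : algType k) (a b c : A).
Hypothesis pres : um_presented a b c.
Hypothesis char2 : 2%:R = 0 :> A.
Let rels : um_rels a b c := proj1 pres.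

Local Notation eval_word := (eval_word a b c).
Local Notation eval_poly := (eval_poly a b c).
Local Notation eval_term := (eval_term a b c).

Definition monomials : seq A := map eval_word normal_words.

Lemma span_monomials_poly (p : ncpoly) :
  all (mem normal_words) p -> in_span monomials (eval_poly p).
Proof.
elim: p => [_|w p IHp /andP [Nw /IHp]]; first by rewrite /eval_poly big_nil; apply: span0.
by rewrite eval_poly_cons -[eval_word w]scale1r; apply: spanD; apply: map_f.
Qed.

Lemma span_monomials_gen (x : nat) : (x < 3)%N ->
  forall w, in_span monomials w -> in_span monomials (gen a b c x * w).
Proof.
move=> x_lt3; apply: span_linear => [r u v|_ /mapP [w Nw ->]].
  by rewrite mulrDr scalerAr.
have /allP/(_ _ Nw)/allP/(_ x) := normal_words_mul_closed.
rewrite !inE; case: x x_lt3 => [|[|[|]]] // _ /(_ isT) /span_monomials_poly;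
by rewrite (eval_ncmul rels char2) /eval_poly !big_seq1 /= mulr1.
Qed.

Lemma span_monomials (z : A) : in_span monomials z.
Proof.
pose lmul_closed z := forall w, in_span monomials w -> in_span monomials (z * w).
suff mulM : forall z, lmul_closed z.
  by rewrite -[z]mulr1; apply/mulM/span_mem/(map_f eval_word (isT : [::] \in normal_words)).
apply: (@um_presented_ind _ _ lmul_closed _ _ _ _ _ _ _ pres).
- by move=> w; rewrite mul1r.
- by move=> x y Qx Qy w Mw; rewrite mulrDl; apply: span_add; [apply: Qx | apply: Qy].
- by move=> r x Qx w Mw; rewrite -scalerAl; apply: span_scale; apply: Qx.
- by move=> x y Qx Qy w Mw; rewrite -mulrA; apply: Qx; apply: Qy.
- exact: (span_monomials_gen (x := 0)).
- exact: (span_monomials_gen (x := 1)).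
- exact: (span_monomials_gen (x := 2)).
Qed.

Lemma corner_span (e n : term) : corner_check e n ->
  forall z, in_span [:: eval_term e; eval_term n] (eval_term e * z * eval_term e).
Proof.
move=> /allP corner z; move: z (span_monomials z).
apply: span_linear => [r u v|_ /mapP [w Nw ->]].
  by rewrite mulrDr mulrDl -scalerAr -scalerAl.
have /hasP [p p_in eq_p] := corner w Nw.
have -> : eval_term e * eval_word w * eval_term e = eval_poly p.
  have <- : eval_poly (ncmul (nf e) (ncmul [:: w] (nf e))) = eval_poly p := perm_big _ eq_p.
  by rewrite !(eval_ncmul rels char2) !(eval_nf rels char2) /eval_poly big_seq1 mulrA.
move: p_in; rewrite !inE => /or4P [] /eqP ->; rewrite (eval_nf rels char2) /=.
- exact: span0.
- by apply: span_mem; rewrite inE eqxx.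
- by apply: span_mem; rewrite !inE eqxx orbT.
- by apply: span_add; apply: span_mem; rewrite !inE eqxx ?orbT.
Qed.

Lemma local_idempotent_idem (e : term) :
  local_idempotent_check e -> eval_term e * eval_term e = eval_term e.
Proof. by case/and3P => /(nf_eq_sound rels char2). Qed.

Lemma um_local_cover (e : term) (V : lmodType A) (v : V) :
  local_idempotent_check e -> eval_term e *: v = v -> b *: v = 0 -> v != 0 ->
  (forall u : V, exists z : A, z *: v = u) ->
  exists P : lmodType A, projective_cover P V /\ iso_left_ideal P (eval_term e).
Proof.
case/and3P=> /(nf_eq_sound rels char2) /= ee /(nf_eq_sound rels char2) /= nn.
move=> /corner_span corner ev bv nz_v v_gen.
set E := eval_term e in ee nn corner ev *; set N := E * (a * b) * E in nn.
have en : E * N = N by rewrite /N !mulrA ee.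
have ne : N * E = N by rewrite /N -mulrA ee.
have nv : N *: v = 0 by rewrite /N -!scalerA ev bv !scaler0.
have corner2 z : exists x y : k, E * z * E = x *: E + y *: N by apply: span_seq2 (corner z).
exists (left_ideal E); split; last exact: left_ideal_iso.
apply: (left_ideal_cover ee ev v_gen).
exact: (corner_fixed_generates ee en ne nn corner2 ev nv nz_v).
Qed.

Lemma is_V0_cyclic (V : lmodType A) : is_V0 a b c V ->
  exists v : V, [/\ ((1 + a * b + a ^+ 2 * b ^+ 2) * (1 + c)) *: v = v, b *: v = 0,
                    v != 0 & forall u : V, exists z : A, z *: v = u].
Proof.
case=> [[v [/eqP nz_v v_span]] kill]; exists v; have [av bv cv] := kill v.
split=> // [|u]; last by have [s ->] := v_span u; exists s%:A.
by rewrite -scalerA !scalerDl !scale1r cv addr0 !expr2 -!scalerA bv !scaler0 !addr0.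
Qed.

Lemma is_V1_cyclic (V : lmodType A) : is_V1 a b c V ->
  exists v : V, [/\ ((1 + a ^+ 2 * b ^+ 2) * c) *: v = v, b *: v = 0,
                    v != 0 & forall u : V, exists z : A, z *: v = u].
Proof.
case=> v [v2 [v3 [v_span v_free [a1 a2 _] [b1 _ _] [c1 _ _]]]]; exists v.
split=> // [||u].
- by rewrite -scalerA c1 scalerDl scale1r !expr2 -!scalerA b1 !scaler0 addr0.
- apply/eqP=> v0; have := v_free 1 0 0; rewrite v0 scaler0 !scale0r !addr0.
  by case=> // /eqP; rewrite oner_eq0.
- have [x [y [z ->]]] := v_span u; exists (x%:A + y%:A * a + z%:A * a ^+ 2).
  by rewrite expr2 !scalerDl -!scalerA a1 a2.
Qed.

End UmAlgebra.

Theorem lemma3p15 (k : closedFieldType) (A : algType k) (a b c : A) :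
  (2%N \in [pchar k]) -> um_presented a b c ->
  let e0 := (1 + a * b + a ^+ 2 * b ^+ 2) * (1 + c) in
  let e1 := (1 + a ^+ 2 * b ^+ 2) * c in
  [/\ e0 * e0 = e0, e1 * e1 = e1,
      forall V : lmodType A, is_V0 a b c V ->
        exists P : lmodType A, projective_cover P V /\ iso_left_ideal P e0 &
      forall V : lmodType A, is_V1 a b c V ->
        exists P : lmodType A, projective_cover P V /\ iso_left_ideal P e1].
Proof.
move=> char2_k pres e0 e1.
have char2 : 2%:R = 0 :> A by rewrite -(@scaler_nat k A) (pcharf0 char2_k) scale0r.
split.
- exact (local_idempotent_idem pres char2 e0_check).
- exact (local_idempotent_idem pres char2 e1_check).
- move=> V /is_V0_cyclic [v [ev bv nz_v v_gen]].
  exact (um_local_cover pres char2 e0_check ev bv nz_v v_gen).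
- move=> V /is_V1_cyclic [v [ev bv nz_v v_gen]].
  exact (um_local_cover pres char2 e1_check ev bv nz_v v_gen).
Qed.
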